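(* Let $R$ be a commutative Noetherian ring with unity and let $y\in R$ be a nonzero zero divisor. If $\deg[y]>\deg[x]$ for every vertex $[x]\neq[y]$ of $\Gamma_E(R)$, then $\operatorname{ann}(y)$ is a maximal element of $\mathfrak F=\{\operatorname{ann}(z)\mid 0\neq z\in R\}$, and hence is an associated prime of $R$.
   Context: For $x,y\in R$ write $x\sim y$ iff $\operatorname{ann}(x)=\operatorname{ann}(y)$; $[x]$ denotes the equivalence class of $x$. Let $Z^*(R)$ be the set of nonzero zero divisors of $R$. The graph $\Gamma_E(R)$ is the simple graph whose vertices are the classes $[x]$ with $x\in Z^*(R)$, two distinct vertices $[x],[y]$ being adjacent iff $xy=0$. The degree of a vertex is the number of vertices adjacent to it. An associated prime of $R$ is a prime ideal of the form $\operatorname{ann}(y)$, $y\in R$. *)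

From mathcomp Require Import all_boot all_order all_algebra.
From mathcomp Require Import boolp classical_sets cardinality.
Set Implicit Arguments. Unset Strict Implicit. Unset Printing Implicit Defensive.
Import GRing.Theory.
Local Open Scope ring_scope.
Local Open Scope classical_set_scope.

Section Defs.
Variable R : comNzRingType.

Definition is_ideal (I : set R) : Prop :=
  I 0 /\ (forall a b, I a -> I b -> I (a + b)) /\ (forall r a, I a -> I (r * a)).

Definition is_prime_ideal (I : set R) : Prop :=
  is_ideal I /\ ~ I 1 /\ (forall a b, I (a * b) -> I a \/ I b).

Definition noetherian : Prop :=
  forall I : nat -> set R, (forall n, is_ideal (I n)) ->
    (forall n, I n `<=` I n.+1) -> exists N, forall n, (N <= n)%N -> I n = I N.

Definition ann (x : R) : set R := [set r | x * r = 0].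

Definition zero_divisor (x : R) : Prop := exists z, z != 0 /\ x * z = 0.

Definition nz_zero_divisor (x : R) : Prop := x != 0 /\ zero_divisor x.

Definition eclass (x : R) : set R := [set w | ann w = ann x].

Definition vertex (C : set R) : Prop := exists x, nz_zero_divisor x /\ C = eclass x.

Definition adjacent (C D : set R) : Prop :=
  C <> D /\ exists x y, C x /\ D y /\ x * y = 0.

(* neighbourhood of a vertex; its cardinal is the degree *)
Definition nbhd (C : set R) : set (set R) := [set D | vertex D /\ adjacent C D].

Definition deg_lt (C D : set R) : Prop :=
  (nbhd C #<= nbhd D)%card /\ ~ (nbhd D #<= nbhd C)%card.

Definition maximal_ann (y : R) : Prop :=
  y != 0 /\ forall z, z != 0 -> ann y `<=` ann z -> ann z = ann y.

Definition associated_prime (P : set R) : Prop :=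
  is_prime_ideal P /\ exists y, P = ann y.

End Defs.

From mathcomp Require Import all_boot all_order all_algebra.
From mathcomp Require Import boolp classical_sets functions cardinality.
Set Implicit Arguments.
Unset Strict Implicit.
Unset Printing Implicit Defensive.

Local Open Scope ring_scope.
Import GRing.Theory.
Local Open Scope classical_set_scope.

(* If ann y is contained in ann z, then [y] has at most as many neighbours
   as [z]: every neighbour of [y] other than [z] is a neighbour of [z], and
   [z] itself can be traded for [y].  So a strictly larger ann z would give a
   vertex [z] <> [y] with deg [z] >= deg [y].  A maximal annihilator is prime,
   hence an associated prime. *)

Section AnnihilatorGraph.
Variable R : comNzRingType.
Implicit Types x y z : R.

Lemma ann_eclass x y : eclass x = eclass y -> ann x = ann y.
Proof. by move=> exy; have : eclass x x by []; rewrite exy. Qed.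

Lemma vertex_eclass x : nz_zero_divisor x -> vertex (eclass x).
Proof. by exists x. Qed.

Lemma ann_is_ideal x : is_ideal (ann x).
Proof.
split; first by rewrite /ann /= mulr0.
split=> [a b|r a]; rewrite /ann /= => xa; first by move=> xb; rewrite mulrDr xa xb addr0.
by rewrite mulrCA xa mulr0.
Qed.

Lemma maximal_ann_prime y : maximal_ann y -> is_prime_ideal (ann y).
Proof.
move=> [y0 ymax]; split; first exact: ann_is_ideal.
split=> [|a b yab]; first by rewrite /ann /= mulr1; apply/eqP.
have [|ya0] := eqVneq (y * a) 0; first by left.
right; have <- : ann (y * a) = ann y.
  by apply: (ymax _ ya0) => r; rewrite /ann /= -mulrA mulrCA => ->; rewrite mulr0.
by rewrite /ann /= -mulrA; exact: yab.
Qed.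

Lemma nbhd_le_of_ann_sub y z : nz_zero_divisor y -> ann y `<=` ann z ->
  (nbhd (eclass y) #<= nbhd (eclass z))%card.
Proof.
move=> yzd yz.
pose swap (D : set R) := if pselect (D = eclass z) is left _ then eclass y else D.
have swap_inj : set_inj (nbhd (eclass y)) swap.
  move=> D1 D2; rewrite !inE /swap => -[_ [ny1 _]] [_ [ny2 _]].
  by case: pselect => [->|_]; case: pselect => [->|_] // e; case: ny1.
have swap_fun : set_fun (nbhd (eclass y)) (nbhd (eclass z)) swap.
  move=> D [VD [nyD [x [u [annx [uD xu0]]]]]]; rewrite /swap.
  case: pselect => [Dz|nDz]; last first.
    split=> //; split=> [Dz|]; first exact: nDz.
    by exists z, u; split=> //; split=> //; apply: yz; rewrite -annx.
  split; first exact: vertex_eclass.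
  split; first by move=> zy; apply: nyD; rewrite Dz zy.
  by exists u, x; rewrite -Dz mulrC.
by have [f] := injfunPex.2 (ex_intro2 _ _ swap swap_fun swap_inj); exact: inj_card_le f.
Qed.

Lemma maximal_ann_of_deg_max y : nz_zero_divisor y ->
  (forall C, vertex C -> C <> eclass y -> deg_lt C (eclass y)) -> maximal_ann y.
Proof.
move=> yzd degmax; have [y0 [w [w0 yw0]]] := yzd.
split=> // z z0 yz; apply: contrapT => zy.
have zzd : nz_zero_divisor z by split=> //; exists w; split=> //; apply: yz.
have [_ not_le] := degmax _ (vertex_eclass zzd) (fun e => zy (ann_eclass e)).
exact: not_le (nbhd_le_of_ann_sub yzd yz).
Qed.

End AnnihilatorGraph.

Theorem proposition3p1 (R : comNzRingType) (y : R) :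
  noetherian R -> nz_zero_divisor y ->
  (forall C : set R, vertex C -> C <> eclass y -> deg_lt C (eclass y)) ->
  maximal_ann y /\ associated_prime (ann y).
Proof.
move=> _ yzd degmax; have ymax := maximal_ann_of_deg_max yzd degmax.
by split=> //; split; [exact: maximal_ann_prime | exists y].
Qed.
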